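(* $\mathrm T_s(\mathbb F) \not\subseteq \mathsf{AC}^0$. In particular, the language $\mathrm{MAJ}=\{w\in\{0,1\}^+ : \#_1(w) > \#_0(w)\}$, where $\#_\sigma(w)$ is the number of occurrences of $\sigma$ in $w$, is recognized by a transformer over floats with saturated attention and size-preserving embedding and activation functions, yet is not in $\mathsf{AC}^0$.
   Context: Datatypes. All values are binary strings. A float is a rational number whose denominator is a power of $2$, encoded as a sign bit together with a pair $\langle p,q\rangle$ of unsigned binary integers (value $(2s-1)p/q$, $q$ a power of $2$); addition and multiplication are exact rational operations (which yield floats). Division is implemented via an approximate inverse: for an integer $p$, $p^{-1}$ has numerator $\lfloor 2^{|p|}/p\rfloor$ and denominator $2^{|p|}$; dividing by a float $\langle p,q\rangle$ multiplies by numerator $\lfloor 2^{|p|}/p\rfloor\cdot q$ over denominator $2^{|p|}$. The size $|x|$ of a value is its length in bits. A function $f$ on bitstrings is size-preserving if there are constants $c,N$ with $|f(x)|\le c|x|$ whenever $|x|\ge N$; $\mathcal S$ is the set of such functions. Saturated attention: for $a\in\mathbb D^n$, $\mathcal M(a)=\{i:a_i=\max_j a_j\}$, $s(a)_j=1/|\mathcal M(a)|$ for $j\in\mathcal M(a)$, else $0$. Transformer over datatype $\mathbb D$ with alphabet $\Sigma$, dimension $k$, $L$ layers, $H$ heads: embedding $\phi:\Sigma\times\mathbb N\to\mathbb D^k$ in $\mathcal S$, scoring functions $s_{\ell,h}:\mathbb D^k\times\mathbb D^k\to\mathbb D$, activation functions $f_\ell\in\mathcal S$. On $w\in\Sigma^n$: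 $v_{0,i}=\phi(w_i,i)$; $a_{\ell,h,i,j}=s_{\ell,h}(v_{\ell,i},v_{\ell,j})$; $b_{\ell+1,h,i}=\sum_j\alpha(a_{\ell,h,i,\cdot})_j v_{\ell,j}$ (arithmetic in $\mathbb D$); $v_{\ell+1,i}=f_{\ell+1}(v_{\ell,i},b_{\ell+1,1,i},\dots,b_{\ell+1,H,i})$. It recognizes $L$ if for a rational affine map $W,b$: $W v_{L,1}(w)+b>0\iff w\in L$. $\mathrm T_\alpha(\mathbb D)$ is the class of languages so recognized with attention $\alpha$, datatype $\mathbb D$, some $k$, and embedding/activation functions in $\mathcal S$. $\mathsf{AC}^0$ is the class of languages $L\subseteq\{0,1\}^*$ recognized by a (non-uniform) family of circuits $\{C_n\}$, with unbounded fan-in AND/OR gates (inputs are the bits and their negations), polynomial size and constant depth, where $C_{|w|}(w)=1\iff w\in L$. *)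

From HB Require Import structures.
From mathcomp Require Import all_boot all_order all_algebra.
Set Implicit Arguments. Unset Strict Implicit. Unset Printing Implicit Defensive.
Import Order.TTheory GRing.Theory Num.Theory.
Local Open Scope nat_scope.

(* Bit length of an unsigned binary integer (|0| = 1, i.e. the string "0"). *)
Definition bitlen (n : nat) : nat := (trunc_log 2 n).+1.

(* Floats: sign bit s, unsigned integers p and q = 2^e; value (2s-1) p / q. *)
Record float := Float { fsgn : bool; fnum : nat; fexp : nat }.

Definition fden (x : float) : nat := 2 ^ fexp x.

Definition fval (x : float) : rat :=
  ((if fsgn x then 1 else -1) * (fnum x)%:R / (fden x)%:R)%R.

Definition fsize (x : float) : nat := 1 + bitlen (fnum x) + bitlen (fden x).

Definition fint (x : float) : int :=
  if fsgn x then Posz (fnum x) else (- Posz (fnum x))%R.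

Definition fzero : float := Float true 0 0.

Definition fmul (x y : float) : float :=
  Float (fsgn x == fsgn y) (fnum x * fnum y) (fexp x + fexp y).

Definition fadd (x y : float) : float :=
  let e := maxn (fexp x) (fexp y) in
  let z := (fint x * Posz (2 ^ (e - fexp x)) + fint y * Posz (2 ^ (e - fexp y)))%R in
  Float (0 <= z)%R (absz z) e.

Definition finv_nat (m : nat) : float :=
  Float true (2 ^ bitlen m %/ m) (bitlen m).

Definition vecF (k : nat) := 'I_k -> float.

Definition vsize (k : nat) (v : vecF k) : nat := \sum_(c < k) fsize (v c).

Definition size_preserving (A B : Type) (sA : A -> nat) (sB : B -> nat)
  (f : A -> B) : Prop :=
  exists c N : nat, forall x : A, N <= sA x -> sB (f x) <= c * sA x.

Definition sat_max_set (n : nat) (a : 'I_n -> float) : {set 'I_n} :=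
  [set j | [forall j', (fval (a j') <= fval (a j))%R]].

Definition sat_weight (n : nat) (a : 'I_n -> float) (j : 'I_n) : float :=
  if j \in sat_max_set a then finv_nat #|sat_max_set a| else fzero.

Definition attn_sum (n k : nat) (a : 'I_n -> float) (v : 'I_n -> vecF k)
  : vecF k :=
  fun c => foldl fadd fzero [seq fmul (sat_weight a j) (v j c) | j <- enum 'I_n].

Definition layer (n k H : nat) (score : 'I_H -> vecF k -> vecF k -> float)
  (f : vecF k -> ('I_H -> vecF k) -> vecF k) (v : 'I_n -> vecF k)
  : 'I_n -> vecF k :=
  fun i => f (v i) (fun h => attn_sum (fun j => score h (v i) (v j)) v).

(* v_{l,i}: layer l (l = 0 is the embedding); positions are 1-based
   (position i+1 for the ordinal i), so v_{L,1} is at ordinal ord0. *)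
Fixpoint run (Sigma : Type) (k H : nat) (phi : Sigma -> nat -> vecF k)
  (score : nat -> 'I_H -> vecF k -> vecF k -> float)
  (act : nat -> vecF k -> ('I_H -> vecF k) -> vecF k)
  (n : nat) (w : n.-tuple Sigma) (l : nat) : 'I_n -> vecF k :=
  match l with
  | 0 => fun i => phi (tnth w i) i.+1
  | l'.+1 => layer (score l') (act l) (run phi score act w l')
  end.

Definition emb_in_size (Sigma : Type) (x : Sigma * nat) : nat := 1 + bitlen x.2.

Definition act_in_size (k H : nat) (x : vecF k * ('I_H -> vecF k)) : nat :=
  vsize x.1 + \sum_(h < H) vsize (x.2 h).

(* Layer l (0 <= l < L) uses scoring functions score l h and activation
   act (l+1). *)
Definition T_sat_float (Sigma : Type) (Lang : seq Sigma -> Prop) : Prop :=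
  exists (k L H : nat) (phi : Sigma -> nat -> vecF k)
         (score : nat -> 'I_H -> vecF k -> vecF k -> float)
         (act : nat -> vecF k -> ('I_H -> vecF k) -> vecF k)
         (W : 'I_k -> rat) (b : rat),
    size_preserving (@emb_in_size Sigma) (@vsize k)
      (fun x : Sigma * nat => phi x.1 x.2) /\
    (forall l, 1 <= l <= L ->
       size_preserving (@act_in_size k H) (@vsize k)
         (fun x : vecF k * ('I_H -> vecF k) => act l x.1 x.2)) /\
    (forall (m : nat) (w : m.+1.-tuple Sigma),
       (0 < \sum_(c < k) W c * fval (run phi score act w L ord0 c) + b)%R
       <-> Lang w).

Inductive wire := Lit of nat & bool   (* Lit i true = x_i, Lit i false = ~x_i *)
                | Gt of nat.          (* output of an earlier gate *)

Record gate := Gate { gand : bool (* true = AND, false = OR *);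
                      ginputs : seq wire }.

Definition circuit := seq gate.

Definition eval_wire (w : seq bool) (vals : seq bool) (x : wire) : bool :=
  match x with
  | Lit i pos => if pos then nth false w i else ~~ nth false w i
  | Gt j => nth false vals j
  end.

Definition eval_gate (w : seq bool) (vals : seq bool) (g : gate) : bool :=
  if gand g then all (eval_wire w vals) (ginputs g)
  else has (eval_wire w vals) (ginputs g).

Definition circuit_vals (w : seq bool) (C : circuit) : seq bool :=
  foldl (fun vals g => rcons vals (eval_gate w vals g)) [::] C.

Definition circuit_out (w : seq bool) (C : circuit) : bool :=
  last false (circuit_vals w C).

Definition wire_depth (ds : seq nat) (x : wire) : nat :=
  match x with Lit _ _ => 0 | Gt j => nth 0 ds j end.

Definition gate_depths (C : circuit) : seq nat :=
  foldl (fun ds g => rcons ds (\max_(x <- ginputs g) wire_depth ds x).+1) [::] C.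

Definition circuit_depth (C : circuit) : nat := \max_(d <- gate_depths C) d.

Definition circuit_size (C : circuit) : nat := size C.

Definition wf_wire (n t : nat) (x : wire) : bool :=
  match x with Lit i _ => i < n | Gt j => j < t end.

Definition wf_circuit (n : nat) (C : circuit) : bool :=
  all (fun t => all (wf_wire n t) (ginputs (nth (Gate true [::]) C t)))
      (iota 0 (size C)).

Definition AC0 (Lang : seq bool -> Prop) : Prop :=
  exists (C : nat -> circuit) (c d : nat),
    forall n : nat,
      [/\ wf_circuit n (C n),
          circuit_size (C n) <= c * n ^ c + c,
          circuit_depth (C n) <= d &
          forall w : seq bool, size w = n -> (circuit_out w (C n) <-> Lang w)].

(* MAJ = { w in {0,1}^+ : #_1(w) > #_0(w) } ;  true = 1, false = 0 *)
Definition MAJ (w : seq bool) : Prop :=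
  0 < size w /\ count_mem false w < count_mem true w.

From mathcomp Require Import all_boot all_order all_algebra.
From mathcomp Require Import zify ring.
Set Implicit Arguments. Unset Strict Implicit. Unset Printing Implicit Defensive.
Import Order.TTheory GRing.Theory Num.Theory.

(* A single attention head with constant scores averages the embeddings +1/-1
   of the input bits, so the sign of its output is the sign of #1 - #0.

   MAJ is not in AC^0, by the Razborov-Smolensky method over Z/3.  An OR of
   q_1, ..., q_k agrees with 1 - prod_(r < l) (1 - (sum_(j in T_r) q_j)^2) for
   all but a 2^-l fraction of inputs, for suitable subsets T_r; hence a circuit
   of depth d and size s agrees with a polynomial of degree (2l)^d outside
   s 2^N / 2^l inputs.  Padding the input of a MAJ circuit on 2N bits yields
   the thresholds [k < |x|] on N bits, and a signed sum of thresholds is the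
   parity character (-1)^|x|.  If (-1)^|x| agrees with a polynomial of degree
   D on a set G, then every function on G agrees with a polynomial of degree
   N/2 + D, so |G| is at most the number of sets of size at most N/2 + D,
   roughly 2^N/2 + D C(N, N/2): too few when N = 64 D^2. *)

Section LowDegree.
Local Open Scope ring_scope.
Variables (R : comUnitRingType) (n : nat).
Local Notation X := {set 'I_n}.
Implicit Types (S T U x : X) (f g : X -> R).

Definition chi S x : R := \prod_(i < n) (-1) ^+ ((i \in S) && (i \in x)).

Definition symdiff S T : X := [set i | (i \in S) (+) (i \in T)].

Lemma chiM S T x : chi S x * chi T x = chi (symdiff S T) x.
Proof.
rewrite /chi -big_split; apply: eq_bigr => i _.
by rewrite /= -signr_addb inE; case: (i \in x); rewrite ?andbT ?andbF.
Qed.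

Lemma chi1 i x : chi [set i] x = (-1) ^+ (i \in x).
Proof.
rewrite /chi (bigD1 i) //= in_set1 eqxx big1 ?mulr1 // => j /negbTE ji.
by rewrite in_set1 ji.
Qed.

Lemma chiT x : chi setT x = (-1) ^+ #|x|.
Proof.
rewrite /chi -[RHS]prodr_const [RHS]big_mkcond; apply: eq_bigr => i _.
by rewrite in_setT; case: (i \in x).
Qed.

Lemma symdiffK S T : symdiff S (symdiff S T) = T.
Proof. by apply/setP => i; rewrite !inE addKb. Qed.

Lemma card_symdiff S U : (#|U| <= #|S| + #|symdiff S U|)%N.
Proof.
apply: leq_trans (leq_card_setU S _); apply: subset_leq_card.
by apply/subsetP => i iU; rewrite !inE iU; case: (i \in S).
Qed.

Definition deg_le (e : nat) f : Prop :=
  exists c : X -> R, (forall S, (e < #|S|)%N -> c S = 0) /\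
                     forall x, f x = \sum_S c S * chi S x.

Lemma deg_le_mono e1 e2 f : (e1 <= e2)%N -> deg_le e1 f -> deg_le e2 f.
Proof.
by move=> le [c [c0 fE]]; exists c; split=> // S /(leq_ltn_trans le)/c0.
Qed.

Lemma deg_le_ext e f g : f =1 g -> deg_le e f -> deg_le e g.
Proof. by move=> fg [c [c0 fE]]; exists c; split=> // x; rewrite -fg. Qed.

Lemma deg_le_chi S : deg_le #|S| (chi S).
Proof.
exists (fun T => (T == S)%:R); split=> [T|x].
  by case: eqP => [->|]; rewrite ?ltnn.
rewrite (bigD1 S) //= eqxx mul1r big1 ?addr0 // => T /negbTE ->.
by rewrite mul0r.
Qed.

Lemma deg_le_cst e (a : R) : deg_le e (fun _ => a).
Proof.
exists (fun T => (T == set0)%:R * a); split=> [T|x].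
  by case: eqP => [->|]; rewrite ?cards0 ?mul0r.
rewrite (bigD1 set0) //= eqxx mul1r big1 ?addr0.
  by rewrite /chi big1 ?mulr1 // => i _; rewrite in_set0.
by move=> T /negbTE ->; rewrite !mul0r.
Qed.

Lemma deg_leD e f g : deg_le e f -> deg_le e g -> deg_le e (fun x => f x + g x).
Proof.
move=> [c [c0 fE]] [d [d0 gE]]; exists (fun S => c S + d S); split.
  by move=> S lt; rewrite c0 ?d0 ?addr0.
by move=> x; rewrite fE gE -big_split; apply: eq_bigr => S _; rewrite mulrDl.
Qed.

Lemma deg_leZ e (a : R) f : deg_le e f -> deg_le e (fun x => a * f x).
Proof.
move=> [c [c0 fE]]; exists (fun S => a * c S); split.
  by move=> S lt; rewrite c0 ?mulr0.
by move=> x; rewrite fE mulr_sumr; apply: eq_bigr => S _; rewrite mulrA.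
Qed.

Lemma deg_leB e f g : deg_le e f -> deg_le e g -> deg_le e (fun x => f x - g x).
Proof.
move=> df /(deg_leZ (-1)) dg; apply: deg_le_ext (deg_leD df dg) => x.
by rewrite mulN1r.
Qed.

Lemma deg_leM e1 e2 f g : deg_le e1 f -> deg_le e2 g ->
  deg_le (e1 + e2) (fun x => f x * g x).
Proof.
move=> [c [c0 fE]] [d [d0 gE]].
exists (fun U => \sum_S c S * d (symdiff S U)); split=> [U ltU|x].
  apply: big1 => S _; case: (leqP #|S| e1) => hS; last by rewrite c0 ?mul0r.
  by rewrite d0 ?mulr0 //; have := card_symdiff S U; lia.
rewrite fE gE mulr_suml.
under eq_bigr => S _ do rewrite mulr_sumr.
under eq_bigr => S _ do under eq_bigr => T _ do rewrite mulrACA chiM.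
under eq_bigr => S _ do rewrite (reindex_inj (can_inj (symdiffK S))) /=.
rewrite exchange_big /=; apply: eq_bigr => U _; rewrite mulr_suml.
by apply: eq_bigr => S _; rewrite symdiffK.
Qed.

Lemma deg_le_sum e (I : Type) (r : seq I) (P : pred I) (F : I -> X -> R) :
  (forall i, deg_le e (F i)) -> deg_le e (fun x => \sum_(i <- r | P i) F i x).
Proof.
move=> dF; elim: r => [|a r IH].
  by apply: deg_le_ext (deg_le_cst e 0) => x; rewrite big_nil.
apply: deg_le_ext (deg_leD (_ : deg_le e (fun x => if P a then F a x else 0)) IH).
  by move=> x; rewrite big_cons; case: (P a); rewrite ?add0r.
by case: (P a); [apply: dF | apply: deg_le_cst].
Qed.

Lemma deg_le_prod e k (F : 'I_k -> X -> R) :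
  (forall i, deg_le e (F i)) -> deg_le (k * e) (fun x => \prod_(i < k) F i x).
Proof.
elim: k F => [|k IH] F dF.
  by apply: deg_le_ext (deg_le_cst _ 1) => x; rewrite big_ord0.
rewrite mulSn; apply: deg_le_ext (deg_leM (dF ord0) (IH _ (fun i => dF _))) => x.
by rewrite big_ord_recl.
Qed.

Hypothesis two_unit : (2 : R) \is a GRing.unit.

Lemma deg_le_mem i : deg_le 1 (fun x => (i \in x)%:R).
Proof.
have := deg_le_chi [set i]; rewrite cards1 => /(deg_leB (deg_le_cst 1 1)).
move/(deg_leZ 2^-1); apply: deg_le_ext => x; rewrite chi1.
by case: (i \in x); rewrite ?subrr ?mulr0 // opprK mulVr.
Qed.

Lemma deg_le_full f : deg_le n f.
Proof.
pose delta (a x : X) : R :=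
  \prod_(i < n) (if i \in a then (i \in x)%:R else 1 - (i \in x)%:R).
have deltaE a x : delta a x = (x == a)%:R.
  rewrite /delta; case: eqP => [->|/eqP neq].
    by apply: big1 => i _; case: (i \in a); rewrite ?subr0.
  have [i /= x_a_i|same] := pickP (fun i => (i \in x) != (i \in a)); last first.
    by case/eqP: neq; apply/setP => i; apply/eqP/negbFE/same.
  rewrite (bigD1 i) //=; move: x_a_i.
  by case: (i \in a); case: (i \in x) => //= _; rewrite ?subrr mul0r.
apply: deg_le_ext (_ : deg_le n (fun x => \sum_a f a * delta a x)).
  move=> x; rewrite (bigD1 x) //= deltaE eqxx mulr1 big1 ?addr0 // => a /negbTE.
  by rewrite deltaE eq_sym => ->; rewrite mulr0.
apply: deg_le_sum => a; apply: deg_leZ; rewrite -[n]muln1; apply: deg_le_prod => i.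
case: (i \in a); first exact: deg_le_mem.
exact: deg_leB (deg_le_cst _ 1) (deg_le_mem i).
Qed.

End LowDegree.

Arguments chi {R n}.
Arguments deg_le_chi {R n}.
Arguments deg_le_cst {R n}.

Lemma leq_card_onto (A B : finType) (f : A -> B) :
  (forall b, exists a, b = f a) -> #|B| <= #|A|.
Proof.
move=> onto; rewrite -(size_codom f); apply: leq_trans (card_size _).
by apply: subset_leq_card; apply/subsetP => b _; apply/codomP.
Qed.

Definition small_sets N e := [set S : {set 'I_N} | (#|S| <= e)%N].

Section Interpolation.
Local Open Scope ring_scope.
Variables (R : finComUnitRingType) (N : nat).
Local Notation X := {set 'I_N}.

Lemma card_interpolation_le (G : {set X}) e :
  (forall f : X -> R, exists2 g, deg_le e g & {in G, g =1 f}) ->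
  (#|G| <= #|small_sets N e|)%N.
Proof.
move=> interp.
pose eval (c : {ffun {S | S \in small_sets N e} -> R}) :
  {ffun {x | x \in G} -> R} := [ffun x => \sum_S c S * chi (val S) (val x)].
have /leq_card_onto : forall h, exists c, h = eval c.
  move=> h; pose f x := if insub x is Some y then h y else 0.
  have [g [c [c0 gE]] gf] := interp f.
  exists [ffun S => c (val S)]; apply/ffunP => y; rewrite ffunE.
  have <- : f (val y) = h y by rewrite /f valK.
  rewrite -gf ?(valP y) // gE (bigID (mem (small_sets N e))) /=.
  rewrite [X in _ + X]big1 ?addr0 => [|S]; last first.
    by rewrite inE -ltnNge => /c0 ->; rewrite mul0r.
  by rewrite big_sub; apply: eq_bigr => S _; rewrite ffunE.
rewrite !card_ffun !card_sig leq_exp2l ?card_finNzRing_gt1 //.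
Qed.

Hypothesis two_unit : (2 : R) \is a GRing.unit.

Lemma card_parity_agreement_le (G : {set X}) (Q : X -> R) m D :
  (N <= m.*2)%N -> deg_le D Q -> {in G, forall x, Q x = (-1) ^+ #|x|} ->
  (#|G| <= #|small_sets N (m + D)|)%N.
Proof.
move=> leNm dQ QG; apply: card_interpolation_le => f.
(* On G, a character of large support S equals Q times the character of ~: S. *)
have [c [_ fE]] := deg_le_full two_unit f.
exists (fun x =>
  \sum_S c S * if (#|S| <= m)%N then chi S x else Q x * chi (~: S) x).
  apply: deg_le_sum => S; apply: deg_leZ; case: leqP => [small|big].
    exact: deg_le_mono (leq_trans small (leq_addr _ _)) (deg_le_chi S).
  apply: deg_le_mono (deg_leM dQ (deg_le_chi (~: S))).
  by have := cardsC S; rewrite card_ord -addnn in leNm *; lia.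
move=> x xG; rewrite fE; apply: eq_bigr => S _; case: leqP => // _.
rewrite QG // -chiT chiM; congr (c S * chi _ x).
by apply/setP => i; rewrite !inE; case: (i \in S).
Qed.

End Interpolation.

Lemma card_sets (T : finType) : #|{set T}| = 2 ^ #|T|.
Proof. by have := card_powerset [set: T]; rewrite powersetT !cardsT. Qed.

Lemma leq_card_small_setsS N e :
  #|small_sets N e.+1| <= #|small_sets N e| + 'C(N, e.+1).
Proof.
rewrite -[in 'C(_, _)](card_ord N) -card_draws.
apply: leq_trans (leq_card_setU _ _); apply: subset_leq_card.
by apply/subsetP => S; rewrite !inE leq_eqVlt ltnS orbC.
Qed.

Lemma leq_bin_mid m i : 'C(m.*2, m + i) <= 'C(m.*2, m).
Proof.
elim: i => [|i IH]; first by rewrite addn0.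
apply: leq_trans IH; rewrite addnS -(leq_pmul2l (ltn0Sn (m + i))) mul_bin_left.
by rewrite leq_mul2r -addnn; apply/orP; right; lia.
Qed.

Lemma leq_card_small_sets_mid m D :
  #|small_sets m.*2 (m + D)| <= #|small_sets m.*2 m| + D * 'C(m.*2, m).
Proof.
elim: D => [|D IH]; first by rewrite addn0 addn0.
rewrite addnS; apply: leq_trans (leq_card_small_setsS _ _) _.
have := leq_bin_mid m D.+1; rewrite addnS; lia.
Qed.

Lemma card_small_sets_half m :
  2 * #|small_sets m.*2 m| = 2 ^ m.*2 + 'C(m.*2, m).
Proof.
set A := small_sets m.*2 m; set B := [set S : {set 'I_m.*2} | m <= #|S|].
have cardSC (S : {set 'I_m.*2}) : #|S| + #|~: S| = m.*2 by rewrite cardsC card_ord.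
have BE : B = [set ~: S | S in A].
  apply/setP => S; rewrite !inE; apply/idP/imsetP => [le_mS|[T + ->]].
    by exists (~: S); rewrite ?setCK // inE; have := cardSC S; lia.
  by rewrite inE; have := cardSC T; lia.
have AUB : A :|: B = setT by apply/setP => S; rewrite !inE; lia.
have AIB : A :&: B = [set S : {set _} | #|S| == m].
  by apply/setP => S; rewrite !inE; lia.
have := cardsUI A B; rewrite AUB AIB card_draws cardsT card_sets card_ord.
by rewrite BE card_imset; [lia | apply: inv_inj setCK].
Qed.

Lemma bin_mid_sqr_le m : 'C(m.*2, m) ^ 2 * m.*2.+1 <= 16 ^ m.
Proof.
elim: m => [//|m IH].
set B := 'C(m.*2, m); set B' := 'C(m.+1.*2, m.+1).
have rec : m.+1 * B' = 2 * (m.*2.+1 * B).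
  have e1 : m.*2.+1 * B = m.+1 * 'C(m.*2.+1, m.+1).
    exact: mul_bin_diag m.*2.+1 m.
  have e2 : m.*2.+2 * 'C(m.*2.+1, m.+1) = m.+1 * B'.
    have := mul_bin_down m.+1.*2 m.+1; rewrite doubleS /= => ->.
    by congr (_ * _); rewrite -addnn; lia.
  by rewrite -e2 e1 -addnn; ring.
have step : m.+1 ^ 2 * (B' ^ 2 * m.+1.*2.+1) =
            4 * (m.*2.+1 * m.*2.+3) * (B ^ 2 * m.*2.+1).
  by rewrite mulnA -expnMn rec doubleS; ring.
have le_prod : m.*2.+1 * m.*2.+3 <= 4 * m.+1 ^ 2 by rewrite -addnn; nia.
rewrite -(leq_pmul2l (expn_gt0 m.+1 2)) step.
apply: leq_trans (leq_mul (leq_mul (leqnn 4) le_prod) IH) _.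
by rewrite (expnS 16) mulnA; apply: eq_leq; ring.
Qed.

Lemma exists_few_bad (T Y : finType) (t0 : T) (bad : T -> Y -> bool) K :
  (forall y, #|[pred t | bad t y]| * K <= #|T|) ->
  exists t, #|[pred y | bad t y]| * K <= #|Y|.
Proof.
move=> few_t; apply/existsP; apply: contraT; rewrite negb_exists => /forallP many.
have double_count : \sum_t #|[pred y | bad t y]| = \sum_y #|[pred t | bad t y]|.
  under eq_bigr do rewrite -sum1_card.
  rewrite (exchange_big_dep predT) //=.
  by apply: eq_bigr => y _; rewrite -sum1_card.
have lower : \sum_(t : T) #|Y|.+1 <= \sum_t #|[pred y | bad t y]| * K.
  by apply: leq_sum => t _; rewrite ltnNge.
have upper : \sum_y #|[pred t | bad t y]| * K <= \sum_(y : Y) #|T|.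
  exact: leq_sum.
move: lower upper.
rewrite -!big_distrl /= double_count !sum_nat_const !cardT -!cardT.
have : 0 < #|T| by apply/card_gt0P; exists t0.
nia.
Qed.

Lemma card_zero_subsums (R : nzRingType) m (c : 'I_m -> bool) j0 : c j0 ->
  2 * #|[set T : {set 'I_m} | (\sum_(j in T) (c j)%:R == 0 :> R)%R]| <= 2 ^ m.
Proof.
move=> cj0; set s := fun T : {set 'I_m} => (\sum_(j in T) (c j)%:R : R)%R.
set Z := [set T | s T == 0%R].
pose toggle (T : {set 'I_m}) := if j0 \in T then T :\ j0 else j0 |: T.
have toggleK : involutive toggle.
  move=> T; rewrite /toggle; case: (boolP (j0 \in T)) => T0.
    by rewrite setD11 setD1K.
  by rewrite setU11 setU1K.
(* Toggling j0 shifts the subsum by -1 or 1. *)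
have toggle_nonzero T : T \in Z -> toggle T \notin Z.
  rewrite !inE /toggle /s; case: ifP => T0 /eqP sT0; apply/eqP => s'0.
    move: sT0; rewrite (big_setD1 _ T0) /= cj0 s'0 addr0 => /eqP.
    by rewrite oner_eq0.
  by move: s'0; rewrite big_setU1 ?T0 //= cj0 sT0 addr0 => /eqP; rewrite oner_eq0.
have : #|toggle @: Z| <= #|~: Z|.
  apply/subset_leq_card/subsetP => _ /imsetP[T TZ ->].
  by rewrite inE toggle_nonzero.
rewrite card_imset; last exact: inv_inj.
by have := cardsC Z; rewrite card_sets card_ord; lia.
Qed.

Lemma exists_random_subsums (R : nzRingType) (Y : finType) m l
    (c : Y -> 'I_m -> bool) :
  exists t : {ffun 'I_l -> {set 'I_m}},
    #|[pred y | [exists j, c y j] &&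
        [forall r, (\sum_(j in t r) (c y j)%:R == 0 :> R)%R]]| * 2 ^ l <= #|Y|.
Proof.
apply: (exists_few_bad [ffun => set0]) => y.
have [j0 cj0|c0] := pickP (c y); last first.
  rewrite (eq_card0 (_ : _ =i pred0)) // => t; rewrite inE /=.
  by apply/negbTE/nandP; left; apply/existsP => -[j]; rewrite c0.
set Z := [set T : {set 'I_m} | (\sum_(j in T) (c y j)%:R == 0 :> R)%R].
rewrite (eq_card (_ : _ =i ffun_on Z)) => [|t]; last first.
  rewrite inE /= (introT existsP (ex_intro _ j0 cj0)).
  by apply/forallP/familyP => Zt r; have := Zt r; rewrite inE.
rewrite card_ffun_on card_ffun !card_ord card_sets -expnMn.
case: l => [//|l]; rewrite card_ord mulnC leq_exp2r //.
exact: card_zero_subsums cj0.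
Qed.

Section OrApproximation.
Local Open Scope ring_scope.
Variable n : nat.
Local Notation X := {set 'I_n}.
Local Notation F := 'Z_3.

Lemma sqrZ3_neq0 (a : F) : a != 0 -> a ^+ 2 = 1.
Proof. by case: a => [[|[|[|]]] //] ? _; apply/val_inj. Qed.

Lemma or_approx (l e k : nat) (q : 'I_k -> X -> F) (c : X -> 'I_k -> bool) :
  (forall j, deg_le e (q j)) ->
  exists (p : X -> F) (E : {set X}),
  [/\ deg_le (l * (e + e)) p, (#|E| * 2 ^ l <= 2 ^ n)%N &
    forall x, x \notin E -> (forall j, q j x = (c x j)%:R) ->
      p x = [exists j, c x j]%:R].
Proof.
move=> dq; have [t card_bad] := exists_random_subsums F l c.
rewrite card_sets card_ord in card_bad.
pose p x := 1 - \prod_(r < l) (1 - (\sum_(j in t r) q j x) ^+ 2).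
exists p, [set x | [exists j, c x j] &&
                   [forall r, \sum_(j in t r) (c x j)%:R == 0 :> F]].
split=> [||x].
- rewrite /p; apply: deg_leB (deg_le_cst _ 1) _; apply: deg_le_prod => r.
  apply: deg_leB (deg_le_cst _ 1) _.
  apply: deg_le_ext (deg_leM (deg_le_sum _ _ dq) (deg_le_sum _ _ dq)) => x.
  by rewrite expr2.
- by rewrite (eq_card (in_set _)).
rewrite inE negb_and negb_forall => good qc; rewrite /p.
under eq_bigr => r _ do under eq_bigr => j _ do rewrite qc.
case: (boolP [exists j, c x j]) good => /= [_ /existsP[r sum_r]|none _].
  by rewrite (bigD1 r) //= sqrZ3_neq0 // subrr mul0r subr0.
rewrite big1 ?subrr // => r _; rewrite big1 ?expr0n ?subr0 // => j _.
by move: none; rewrite negb_exists => /forallP/(_ j)/negbTE ->.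
Qed.

End OrApproximation.

Lemma leq_bigmax_nth (T : Type) (x0 : T) (s : seq T) (F : T -> nat) k :
  k < size s -> F (nth x0 s k) <= \max_(x <- s) F x.
Proof.
elim: s k => [|a s IH] [|k] //=; rewrite big_cons; first by rewrite leq_maxl.
by move=> lt_ks; apply: leq_trans (IH _ lt_ks) (leq_maxr _ _).
Qed.

Lemma has_exists_nth (T : Type) (x0 : T) (p : pred T) (s : seq T) :
  has p s = [exists j : 'I_(size s), p (nth x0 s j)].
Proof.
apply/(has_nthP x0)/existsP => [[i lt_is pi]|[j pj]].
  by exists (Ordinal lt_is).
by exists j.
Qed.

Lemma eval_gateE w vals g : eval_gate w vals g =
  gand g (+) has (fun x => gand g (+) eval_wire w vals x) (ginputs g).
Proof.
rewrite /eval_gate; case: (gand g) => /=; last by apply: eq_has.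
by rewrite -all_predC; apply: eq_all => x /=; rewrite negbK.
Qed.

Lemma circuit_vals_rcons w C g : circuit_vals w (rcons C g) =
  rcons (circuit_vals w C) (eval_gate w (circuit_vals w C) g).
Proof. by rewrite /circuit_vals foldl_rcons. Qed.

Lemma size_circuit_vals w C : size (circuit_vals w C) = size C.
Proof.
by elim/last_ind: C => // C g IH; rewrite circuit_vals_rcons !size_rcons IH.
Qed.

Lemma gate_depths_rcons C g : gate_depths (rcons C g) =
  rcons (gate_depths C) (\max_(x <- ginputs g) wire_depth (gate_depths C) x).+1.
Proof. by rewrite /gate_depths foldl_rcons. Qed.

Lemma size_gate_depths C : size (gate_depths C) = size C.
Proof.
by elim/last_ind: C => // C g IH; rewrite gate_depths_rcons !size_rcons IH.
Qed.

Section CircuitApproximation.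
Local Open Scope ring_scope.
Variables (n : nat) (inp : {set 'I_n} -> seq bool) (l : nat).
Local Notation X := {set 'I_n}.
Local Notation F := 'Z_3.
Hypothesis deg_inp : forall i, deg_le 1 (fun x => (nth false (inp x) i)%:R : F).
Hypothesis l_gt0 : (0 < l)%N.

Definition negate_if (b : bool) (f : X -> F) x := if b then 1 - f x else f x.

Lemma deg_le_negate_if e b f : deg_le e f -> deg_le e (negate_if b f).
Proof. by case: b => df //; apply: deg_leB (deg_le_cst _ 1) df. Qed.

Lemma negate_ifE b f x (a : bool) : f x = a%:R -> negate_if b f x = (b (+) a)%:R.
Proof. by rewrite /negate_if => ->; case: b; case: a; rewrite ?subr0 ?subrr. Qed.

(* Indices j beyond size C are harmless: there nth yields the zero polynomial,
   depth 0 and the value false. *)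
Definition approximates (C : circuit) (ps : seq (X -> F)) (E : {set X}) :=
  [/\ size ps = size C, (#|E| * 2 ^ l <= size C * 2 ^ n)%N,
      forall j, deg_le ((2 * l) ^ nth 0%N (gate_depths C) j) (nth (fun=> 0) ps j) &
      forall x, x \notin E -> forall j,
        nth (fun=> 0) ps j x = (nth false (circuit_vals (inp x) C) j)%:R].

Lemma approximates_rcons C ps E g : approximates C ps E ->
  exists p E', approximates (rcons C g) (rcons ps p) (E :|: E').
Proof.
case=> size_ps card_E deg_ps val_ps.
set ds := gate_depths C; set ws := ginputs g; set b := gand g.
pose wire_poly (w : wire) : X -> F := match w with
  | Lit i pos => negate_if (~~ pos) (fun x => (nth false (inp x) i)%:R)
  | Gt j => nth (fun=> 0) ps j end.
have deg_wire w : deg_le ((2 * l) ^ wire_depth ds w) (wire_poly w).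
  by case: w => [i pos|j]; [apply: deg_le_negate_if; rewrite expn0 | apply: deg_ps].
have val_wire x w : x \notin E ->
    wire_poly w x = (eval_wire (inp x) (circuit_vals (inp x) C) w)%:R.
  case: w => [i pos|j] xE /=; last exact: val_ps.
  by rewrite (negate_ifE _ (erefl _)); case: pos.
set M := \max_(w <- ws) wire_depth ds w.
pose w0 := Lit 0 true.
pose q (j : 'I_(size ws)) := negate_if b (wire_poly (nth w0 ws j)).
pose c x (j : 'I_(size ws)) :=
  b (+) eval_wire (inp x) (circuit_vals (inp x) C) (nth w0 ws j).
have deg_q j : deg_le ((2 * l) ^ M) (q j).
  apply/deg_le_negate_if/(deg_le_mono _ (deg_wire _)).
  by rewrite leq_pexp2l ?muln_gt0 ?l_gt0 ?leq_bigmax_nth.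
have [p [E' [deg_p card_E' val_p]]] := or_approx l c deg_q.
exists (negate_if b p), E'; split.
- by rewrite !size_rcons size_ps.
- rewrite size_rcons mulSn; apply: leq_trans (leq_add card_E' card_E).
  by rewrite -mulnDl leq_mul2r addnC (leq_card_setU _ _).1 orbT.
- move=> j; rewrite gate_depths_rcons !nth_rcons size_gate_depths size_ps.
  case: ltngtP => [_|_|_]; [exact: deg_ps | exact: deg_le_cst |].
  apply: deg_le_negate_if; move: deg_p.
  by rewrite addnn -mul2n mulnA (mulnC l) -expnS.
- move=> x; rewrite inE negb_or => /andP[xE xE'] j.
  rewrite circuit_vals_rcons !nth_rcons size_circuit_vals size_ps.
  case: ltngtP => [_|_|_]; [exact: val_ps | by [] |].
  rewrite eval_gateE (has_exists_nth w0); apply: negate_ifE; apply: val_p => // k.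
  exact/negate_ifE/val_wire.
Qed.

Lemma approximates_circuit C : exists ps E, approximates C ps E.
Proof.
elim/last_ind: C => [|C g [ps [E /(approximates_rcons g)[p [E' approx]]]]].
  exists [::], set0; split=> // [|j|x _ j]; rewrite ?cards0 ?nth_nil //.
  exact: deg_le_cst.
by exists (rcons ps p), (E :|: E').
Qed.

Lemma approximates_output C d : (circuit_depth C <= d)%N ->
  exists (p : X -> F) (E : {set X}),
  [/\ deg_le ((2 * l) ^ d) p, (#|E| * 2 ^ l <= size C * 2 ^ n)%N &
      forall x, x \notin E -> p x = (circuit_out (inp x) C)%:R].
Proof.
move=> depth_C; have [ps [E [_ card_E deg_ps val_ps]]] := approximates_circuit C.
exists (nth (fun=> 0) ps (size C).-1), E; split=> // [|x xE].
  apply: deg_le_mono (deg_ps _); rewrite leq_pexp2l ?muln_gt0 ?l_gt0 //.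
  apply: leq_trans depth_C; rewrite -size_gate_depths.
  case: (ltnP (size (gate_depths C)).-1 (size (gate_depths C))) => [lt|ge].
    exact: (leq_bigmax_nth 0%N id).
  by rewrite nth_default.
by rewrite /circuit_out -nth_last size_circuit_vals; apply: val_ps.
Qed.

End CircuitApproximation.

Definition pad N k (x : {set 'I_N}) : seq bool :=
  [seq i \in x | i <- enum 'I_N] ++ nseq (N - k) true ++ nseq k false.

Lemma size_pad N k (x : {set 'I_N}) : k <= N -> size (pad k x) = N + N.
Proof. by rewrite /pad !size_cat size_map size_enum_ord !size_nseq; lia. Qed.

Lemma count_true_pad N k (x : {set 'I_N}) :
  count_mem true (pad k x) = #|x| + (N - k).
Proof.
rewrite /pad !count_cat count_map !count_nseq /= mul1n mul0n addn0; congr (_ + _).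
rewrite cardE -size_filter /enum_mem -filter_predI; congr size.
by apply: eq_filter => i /=; rewrite andbT eqb_id.
Qed.

Lemma count_false_bool (s : seq bool) :
  count_mem false s = size s - count_mem true s.
Proof.
rewrite -(count_predC (pred1 true)) addKn.
by apply: eq_count => b; rewrite /= eqbF_neg eqb_id.
Qed.

Lemma MAJ_pad N k (x : {set 'I_N}) : k < N -> MAJ (pad k x) <-> k < #|x|.
Proof.
move=> lt_kN; have size_x : #|x| <= N by have := max_card x; rewrite card_ord.
rewrite /MAJ count_false_bool count_true_pad (size_pad _ (ltnW lt_kN)).
split=> [[_ maj]|lt_kx]; [lia | split; lia].
Qed.

Lemma sign_thresholds_sum (R : comPzRingType) N w : w <= N ->
  (1 + \sum_(k < N) 2 * (-1) ^+ k.+1 * (k < w)%:R = (-1) ^+ w :> R)%R.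
Proof.
move=> le_wN.
rewrite -(big_mkord xpredT (fun k => 2 * (-1) ^+ k.+1 * (k < w)%:R)%R).
rewrite (telescope_sumr_eq (fun k => (-1) ^+ minn k w)%R) // => [|k _].
  by rewrite (minn_idPr le_wN) min0n expr0 addrC subrK.
have [lt_kw|le_wk] := ltnP k w.
  by rewrite (minn_idPl lt_kw) mulr1 exprS; ring.
by rewrite (minn_idPr (leqW le_wk)) subrr mulr0.
Qed.

Section MajorityApproximation.
Local Open Scope ring_scope.
Variables (N : nat) (C : circuit) (l d : nat).
Local Notation X := {set 'I_N}.
Local Notation F := 'Z_3.
Hypotheses (l_gt0 : (0 < l)%N) (depth_C : (circuit_depth C <= d)%N).
Hypothesis C_MAJ : forall w, size w = (N + N)%N -> circuit_out w C <-> MAJ w.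

Lemma deg_le_pad_bit k i : deg_le 1 (fun x : X => (nth false (pad k x) i)%:R : F).
Proof.
rewrite /pad; have [lt_iN|le_Ni] := ltnP i N; last first.
  pose padding := nseq (N - k) true ++ nseq k false.
  apply: deg_le_ext (deg_le_cst 1 (nth false padding (i - N))%:R) => x.
  by rewrite (nth_cat _ [seq _ \in x | _ <- _]) size_map size_enum_ord ltnNge le_Ni.
have two_unit : (2 : F) \is a GRing.unit by [].
apply: deg_le_ext (deg_le_mem two_unit (Ordinal lt_iN)) => x.
rewrite (nth_cat _ [seq _ \in x | _ <- _]) size_map size_enum_ord lt_iN.
rewrite (nth_map (Ordinal lt_iN)) ?size_enum_ord //.
by congr ((_ \in x)%:R); apply: val_inj; rewrite /= nth_enum_ord.
Qed.

Lemma threshold_approx k : (k < N)%N ->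
  exists (p : X -> F) (E : {set X}),
  [/\ deg_le ((2 * l) ^ d) p, (#|E| * 2 ^ l <= size C * 2 ^ N)%N &
      forall x, x \notin E -> p x = (k < #|x|)%N%:R].
Proof.
move=> lt_kN; have [p [E [deg_p card_E val_p]]] :=
  approximates_output (@deg_le_pad_bit k) l_gt0 depth_C.
exists p, E; split=> // x xE; rewrite val_p //.
have C_pad := C_MAJ (size_pad x (ltnW lt_kN)); have MAJ_x := MAJ_pad x lt_kN.
by congr (nat_of_bool _)%:R; apply/idP/idP => [/C_pad/MAJ_x|/MAJ_x/C_pad].
Qed.

Lemma parity_approx :
  exists (Q : X -> F) (E : {set X}),
  [/\ deg_le ((2 * l) ^ d) Q, (#|E| * 2 ^ l <= N * (size C * 2 ^ N))%N &
      forall x, x \notin E -> Q x = (-1) ^+ #|x|].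
Proof.
have partial K : (K <= N)%N -> exists (Q : X -> F) (E : {set X}),
    [/\ deg_le ((2 * l) ^ d) Q, (#|E| * 2 ^ l <= K * (size C * 2 ^ N))%N &
        forall x, x \notin E ->
          Q x = 1 + \sum_(k < K) 2 * (-1) ^+ k.+1 * (k < #|x|)%N%:R].
  elim: K => [_|K IH lt_KN].
    exists (fun=> 1), set0; split=> [||x _]; first exact: deg_le_cst.
      by rewrite cards0.
    by rewrite big_ord0 addr0.
  have [Q [E [deg_Q card_E val_Q]]] := IH (ltnW lt_KN).
  have [p [E' [deg_p card_E' val_p]]] := threshold_approx lt_KN.
  exists (fun x => Q x + 2 * (-1) ^+ K.+1 * p x), (E :|: E'); split.
  - exact: deg_leD deg_Q (deg_leZ _ deg_p).
  - rewrite mulSn; apply: leq_trans (leq_add card_E' card_E).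
    by rewrite -mulnDl leq_mul2r addnC (leq_card_setU _ _).1 orbT.
  - move=> x; rewrite inE negb_or => /andP[xE xE'].
    by rewrite big_ord_recr /= val_Q // val_p // addrA.
have [Q [E [deg_Q card_E val_Q]]] := partial N (leqnn N).
exists Q, E; split=> // x xE; rewrite val_Q // sign_thresholds_sum //.
by have := max_card x; rewrite card_ord.
Qed.

End MajorityApproximation.

Lemma exists_exp_dominates A B : exists l, 0 < l /\ A * (2 * l) ^ B <= 2 ^ l.
Proof.
set b := A + 3 * B + 1.
exists (2 ^ (b + b)); split; first by rewrite expn_gt0.
rewrite -expnS -expnM.
have le_A : A <= 2 ^ A by apply/ltnW/ltn_expl.
apply: leq_trans (_ : 2 ^ A * 2 ^ ((b + b).+1 * B) <= _).
  by rewrite leq_mul2r le_A orbT.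
rewrite -expnD leq_exp2l //.
have : b * b <= 2 ^ b * 2 ^ b by apply: leq_mul; apply/ltnW/ltn_expl.
by rewrite -expnD; nia.
Qed.

Lemma exists_l_dominating c d : exists l, 0 < l /\
  let N := 64 * ((2 * l) ^ d) ^ 2 in 8 * N * (c * (N + N) ^ c + c) <= 2 ^ l.
Proof.
have [l [l_gt0 le_l]] :=
  exists_exp_dominates (1024 * c * 128 ^ c) (d * (2 + 2 * c)).
exists l; split=> //=; apply: leq_trans le_l.
set P := (2 * l) ^ d.
have P_gt0 : 0 < P by rewrite expn_gt0 muln_gt0 l_gt0.
have -> : (2 * l) ^ (d * (2 + 2 * c)) = P ^ 2 * (P ^ 2) ^ c.
  by rewrite -expnM -expnD /P -expnM.
have -> : (64 * P ^ 2 + 64 * P ^ 2) ^ c = 128 ^ c * (P ^ 2) ^ c.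
  by rewrite addnn -mul2n mulnA -expnMn.
have vu_gt0 : 0 < 128 ^ c * (P ^ 2) ^ c.
  by rewrite muln_gt0 expn_gt0 /= expn_gt0 (expn_gt0 P) P_gt0.
set u := (P ^ 2) ^ c in vu_gt0 *; set v := 128 ^ c in vu_gt0 *; set w := P ^ 2.
nia.
Qed.

Lemma binomial_sqrt_bound_absurd T Cb a N :
  Cb ^ 2 * N.+1 <= T * T -> 3 * T <= 4 * a * Cb -> 4 * a ^ 2 < N.+1 -> 0 < T ->
  False.
Proof.
move=> Cb_small T_le big_N T_gt0.
have sq : 9 * (T * T) <= 16 * a ^ 2 * Cb ^ 2.
  have -> : 16 * a ^ 2 * Cb ^ 2 = 4 * a * Cb * (4 * a * Cb) by ring.
  by rewrite (_ : 9 * (T * T) = 3 * T * (3 * T)); [apply: leq_mul | ring].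
have : 9 * (T * T) * N.+1 <= 16 * a ^ 2 * (T * T).
  apply: leq_trans (leq_mul sq (leqnn N.+1)) _.
  by rewrite -mulnA leq_mul2l Cb_small orbT.
have TT_gt0 : 0 < T * T by rewrite muln_gt0 T_gt0.
nia.
Qed.

Theorem MAJ_not_AC0 : ~ AC0 MAJ.
Proof.
move=> [C [c [d C_ok]]].
have [l [l_gt0 big_l]] := exists_l_dominating c d.
set D := (2 * l) ^ d in big_l; set m := 32 * D ^ 2; set N := m.*2.
have N_eq : N = 64 * D ^ 2 by rewrite /N /m -mul2n mulnA.
have [_ size_C depth_C C_MAJ] := C_ok (N + N).
have [Q [E [deg_Q card_E val_Q]]] := parity_approx l_gt0 depth_C C_MAJ.
have few_errors : 8 * #|E| <= 2 ^ N.
  have size_le : 8 * N * size (C (N + N)) <= 2 ^ l.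
    rewrite -N_eq in big_l; apply: leq_trans big_l.
    by rewrite leq_mul2l size_C orbT.
  rewrite -(@leq_pmul2r (2 ^ l)) ?expn_gt0 // -mulnA.
  apply: leq_trans (leq_mul (leqnn 8) card_E) _.
  by rewrite !mulnA [2 ^ N * _]mulnC leq_mul2r size_le orbT.
have parity_on : {in ~: E, forall x, Q x = (-1) ^+ #|x|}%R.
  by move=> x; rewrite inE; exact: val_Q.
have two_unit : (2 : 'Z_3)%R \is a GRing.unit by [].
have := card_parity_agreement_le two_unit (leqnn N) deg_Q parity_on.
have := leq_card_small_sets_mid m D; have := card_small_sets_half m.
have := bin_mid_sqr_le m; have := cardsC E; rewrite card_sets card_ord -/N -/D.
have -> : 16 ^ m = 2 ^ N * 2 ^ N.
  by rewrite -expnD (_ : 16 = 2 ^ 4) // -expnM /N -addnn; congr (2 ^ _); lia.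
move=> E_split Cb_bound half mid G_small.
have lin : 3 * 2 ^ N <= 4 * (2 * D + 1) * 'C(N, m) by lia.
apply: (binomial_sqrt_bound_absurd Cb_bound lin); last by rewrite expn_gt0.
have D_gt0 : 0 < D by rewrite expn_gt0 muln_gt0 l_gt0.
by rewrite N_eq; nia.
Qed.

Section FloatArithmetic.
Local Open Scope ring_scope.

Lemma fvalE x : fval x = (fint x)%:~R / 2 ^+ fexp x.
Proof.
rewrite /fval /fint /fden natrX; case: (fsgn x) => /=; first by rewrite mul1r.
by rewrite mulN1r mulrNz.
Qed.

Lemma fval_fadd x y : fval (fadd x y) = fval x + fval y.
Proof.
have sign_abs (z : int) : (if 0 <= z then Posz `|z|%N else - Posz `|z|%N) = z.
  by case: z => k //=; rewrite NegzE.
rewrite !fvalE /fadd /fint /= sign_abs -/(fint x) -/(fint y).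
set e := maxn _ _; rewrite intrD !intrM -!pmulrn !natrX mulrDl.
have two_pow_neq0 k : (2 ^+ k : rat) != 0 by rewrite expf_neq0.
have splitE k : (k <= e)%N -> (2 : rat) ^+ e = 2 ^+ (e - k) * 2 ^+ k.
  by move=> le_ke; rewrite -exprD subnK.
rewrite {1}(splitE _ (leq_maxl _ _)) {1}(splitE _ (leq_maxr _ _)).
by field; rewrite !two_pow_neq0.
Qed.

Lemma fval_fmul x y : fval (fmul x y) = fval x * fval y.
Proof.
rewrite /fmul /fval /fden /= natrM expnD natrM.
by case: (fsgn x); case: (fsgn y); rewrite /= ?mul1r ?mulN1r ?invfM; ring.
Qed.

Lemma fval_fzero : fval fzero = 0.
Proof. by rewrite /fval mul0r. Qed.

Lemma fval_foldl_fadd a s : fval (foldl fadd a s) = fval a + \sum_(y <- s) fval y.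
Proof.
elim: s a => [|y s IH] a /=; first by rewrite big_nil addr0.
by rewrite IH fval_fadd big_cons addrA.
Qed.

End FloatArithmetic.

Definition maj_embedding (b : bool) (_ : nat) : vecF 1 := fun _ => Float b 1 0.
Definition maj_score (_ : nat) (_ : 'I_1) (_ _ : vecF 1) : float := fzero.
Definition maj_activation (_ : nat) (_ : vecF 1) (b : 'I_1 -> vecF 1) : vecF 1 :=
  b ord0.

Lemma sum_signs (s : seq bool) :
  (\sum_(b <- s) (if b then 1 else -1 : rat) =
   (count_mem true s)%:R - (count_mem false s)%:R)%R.
Proof.
elim: s => [|b s IH]; first by rewrite big_nil subrr.
by rewrite big_cons IH; case: b; rewrite /= ?add1n ?add0n ?natrD; ring.
Qed.

Lemma MAJ_in_T_sat_float : T_sat_float MAJ.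
Proof.
exists 1, 1, 1, maj_embedding, maj_score, maj_activation, (fun=> 1%R), 0%R.
split; [|split].
- exists 3, 0 => x _; rewrite /vsize big_ord1 /emb_in_size /fsize /fden /bitlen /=.
  by rewrite expn0 (_ : trunc_log 2 1 = 0) //; lia.
- by move=> l _; exists 1, 0 => x _; rewrite /act_in_size mul1n big_ord1 leq_addl.
move=> m w; rewrite big_ord1 mul1r addr0 /= /layer /maj_activation /attn_sum.
rewrite fval_foldl_fadd fval_fzero add0r big_map.
have all_max : sat_max_set (fun _ : 'I_m.+1 => fzero) = setT.
  by apply/setP => j; rewrite !inE; apply/forallP.
under eq_bigr => j _ do
  rewrite fval_fmul /sat_weight all_max in_setT cardsT card_ord.
rewrite -big_distrr /= big_enum /=; set q := fval (finv_nat m.+1).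
have q_gt0 : (0 < q)%R.
  rewrite /q /fval /= mul1r divr_gt0 ?ltr0n ?expn_gt0 // divn_gt0 //.
  exact/ltnW/trunc_log_ltn.
have -> : (\sum_(j < m.+1) fval (maj_embedding (tnth w j) j.+1 ord0) =
          \sum_(b <- w) if b then 1 else -1)%R.
  rewrite big_tuple; apply: eq_bigr => j _; rewrite /fval /fden /=.
  by case: (tnth w j); rewrite ?mul1r ?mulN1r ?divr1 // invr1 mulr1.
rewrite sum_signs pmulr_rgt0 // subr_gt0 ltr_nat /MAJ size_tuple.
by split=> [|[]].
Qed.

Theorem proposition3 :
  ~ (forall Lang : seq bool -> Prop, T_sat_float Lang -> AC0 Lang) /\
  T_sat_float MAJ /\ ~ AC0 MAJ.
Proof.
split; first by move=> T_sub_AC0; apply/MAJ_not_AC0/T_sub_AC0/MAJ_in_T_sat_float.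
by split; [exact: MAJ_in_T_sat_float | exact: MAJ_not_AC0].
Qed.
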